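(* Let $A$ be a brick gentle algebra. For any $\widetilde{\mathfrak T}\in\mathrm{torshad}(\Pi(A))$, the set of strings $B(\widetilde{\mathfrak T})$ is a biclosed set.
   Context: Setting: $k$ a field, $A=kQ/I$, $Q$ finite connected quiver, $I$ admissible generated by paths (paths composed right to left). Gentle: (S1) each vertex has at most two incoming and two outgoing arrows; (S2) for each arrow $\alpha$ at most one $\beta$ with $\alpha\beta$ a path not in $I$ and at most one $\gamma$ with $\gamma\alpha$ a path not in $I$; (G1) $I$ generated by paths of length two; (G2) for each arrow $\alpha$ at most one $\beta$ with $\alpha\beta$ a path in $I$ and at most one $\gamma$ with $\gamma\alpha$ a path in $I$. Brick gentle: moreover every indecomposable module has endomorphism ring a division ring. Strings (for any $k\Gamma/J$, $J$ generated by paths): words $w=\gamma_d^{\epsilon_d}\cdots\gamma_1^{\epsilon_1}$ in arrows and formal inverses ($s(\gamma^{-1})=t(\gamma)$, $t(\gamma^{-1})=s(\gamma)$), consecutive letters composable, no $\gamma\gamma^{-1}$ or $\gamma^{-1}\gamma$, neither $w$ nor $w^{-1}$ containing a subword which is a path in $J$; plus length-zero strings; $w\sim w^{-1}$. String module $M(w)$: basis $b_1,\dots,b_{d+1}$, $b_j$ at vertex $x_j$ ($x_1=s(\gamma_1^{\epsilon_1})$, $x_{i+1}=t(\gamma_i^{\epsilon_i})$); $\gamma_i$ sends $b_i\mapsto b_{i+1}$ if $\epsilon_i=1$, $b_{i+1}\mapsto b_i$ if $\epsilon_i=-1$, other actions zero. A concatenation of $u,v\in\mathrm{Str}(A)$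 is a string $v\gamma^{\pm1}u$, $\gamma\in Q_1$; $X\subseteq\mathrm{Str}(A)$ is closed if it contains all concatenations of its elements, biclosed if $X$ and its complement are closed. For $w$ of length $d$, $w=w_1\gamma_j^{\epsilon_j}w_2$ ($1\le j\le d$) gives a break $\{w_1,w_2\}$ with splits $w_1,w_2$. Labels $\mathcal S$: pairs $w_{\mathcal D}=(w,\mathcal D)$, $\mathcal D$ a set of $d$ splits of $w$ no two in the same break, modulo $(w,\mathcal D)\sim(w^{-1},\mathcal D^{-1})$. $\Pi(A)=k\overline Q/\overline I$: $\overline Q$ adds $\gamma^*:t(\gamma)\to s(\gamma)$ for each $\gamma\in Q_1$; $\overline I$ generated by $\beta\alpha,\alpha^*\beta^*$ for paths $\beta\alpha\in I$ of length two. A string of $\Pi(A)$ specializes to the word obtained by replacing $\gamma^*$ by $\gamma^{-1}$ and $(\gamma^* )^{-1}$ by $\gamma$. $\mathcal M$ is the additive closure of all $M(\widetilde w)$ with $\widetilde w$ a string of $\Pi(A)$ specializing to a string of $A$. The map $\mathrm{str}$: for $w_{\mathcal D}$, $w=\gamma_d^{\epsilon_d}\cdots\gamma_1^{\epsilon_1}$, replace the $i$-th letter by $\gamma_i$ if $w=u\gamma_iw'$ with $w'\in\mathcal D$; $\gamma_i^*$ if $w=u\gamma_i^{-1}w'$ with $w'\in\mathcal D$; $\gamma_i^{-1}$ if $w=w'\gamma_i^{-1}u$ with $w'\in\mathcal D$; $(\gamma_i^* )^{-1}$ if $w=w'\gamma_iu$ with $w'\in\mathcal D$ ($u$ possibly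 empty); $\mathrm{str}$ is a bijection from $\mathcal S$ onto the strings of $\Pi(A)$ specializing to strings of $A$. $\mathrm{torshad}(\Pi(A))$ is the set of all $\mathcal T\cap\mathcal M$ with $\mathcal T$ a torsion class (closed under quotients and extensions) of $\mathrm{mod}(\Pi(A))$. For $\widetilde{\mathfrak T}\in\mathrm{torshad}(\Pi(A))$, $B(\widetilde{\mathfrak T}):=\{w\in\mathrm{Str}(A)\mid M(\mathrm{str}(w_{\mathcal D}))\in\widetilde{\mathfrak T}\text{ for some }\mathcal D\}$. *)

From HB Require Import structures.
From mathcomp Require Import all_boot all_order all_algebra.
Set Implicit Arguments. Unset Strict Implicit. Unset Printing Implicit Defensive.
Import GRing.Theory.
Local Open Scope ring_scope.

(* A finite-dimensional (left) module over k Q / I, given by its underlying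
   space k^qdim (row vectors, acting on the right: v |-> v *m _), the action
   of the vertex idempotents e_x and of the arrows. *)
Record qmod (k : fieldType) (V E : Type) := QMod {
  qdim : nat;
  qidem : V -> 'M[k]_qdim;
  qact : E -> 'M[k]_qdim }.

Section BoundQuiver.
Variables (k : fieldType) (V E : finType) (src tgt : E -> V).
(* rel a b  <=>  the length-two path  b a  (first a, then b) lies in I;
   I is the ideal generated by these length-two paths (condition (G1)). *)
Variable rel : E -> E -> bool.

(* a path is a sequence of arrows listed in the order they are traversed:
   [:: a1; ...; an] is the path an ... a1 *)
Definition is_arrow_path (p : seq E) : bool :=
  sorted (fun a b => tgt a == src b) p.
Definition path_in_ideal (p : seq E) : Prop :=
  exists a b, infix [:: a; b] p /\ rel a b.

Definition connected_quiver : Prop :=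
  forall x y : V,
    connect (fun a b => [exists e, ((src e == a) && (tgt e == b))
                                || ((src e == b) && (tgt e == a))]) x y.

Definition admissible_monomial : Prop :=
  (forall a b, rel a b -> tgt a = src b) /\
  exists N : nat, forall p : seq E,
    size p = N -> is_arrow_path p -> path_in_ideal p.

Definition gentle : Prop :=
  [/\ connected_quiver, admissible_monomial,
      forall x : V, (#|[pred a | src a == x]| <= 2)%N /\ (#|[pred a | tgt a == x]| <= 2)%N,
      forall al : E,
        (#|[pred be | (tgt be == src al) && ~~ rel be al]| <= 1)%N /\
        (#|[pred ga | (src ga == tgt al) && ~~ rel al ga]| <= 1)%N
    &
      forall al : E,
        (#|[pred be | rel be al]| <= 1)%N /\ (#|[pred ga | rel al ga]| <= 1)%N].

Definition is_module (M : qmod k V E) : Prop :=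
  [/\ forall x, qidem M x *m qidem M x = qidem M x,
      forall x y, x != y -> qidem M x *m qidem M y = 0,
      \sum_(x : V) qidem M x = 1%:M,
      forall a, qact M a = qidem M (src a) *m qact M a *m qidem M (tgt a)
    & forall a b, rel a b -> qact M a *m qact M b = 0].

Definition is_hom (M N : qmod k V E) (f : 'M[k]_(qdim M, qdim N)) : Prop :=
  (forall x, qidem M x *m f = f *m qidem N x) /\
  (forall a, qact M a *m f = f *m qact N a).

Definition isomorphic (M N : qmod k V E) : Prop :=
  exists f : 'M[k]_(qdim M, qdim N), [/\ is_hom f, row_free f & row_full f].

Definition indecomposable (M : qmod k V E) : Prop :=
  (0 < qdim M)%N /\
  forall e : 'M[k]_(qdim M), is_hom e -> e *m e = e -> e = 0 \/ e = 1%:M.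

Definition end_division (M : qmod k V E) : Prop :=
  forall f : 'M[k]_(qdim M), is_hom f -> f != 0 -> f \in unitmx.

Definition brick_gentle : Prop :=
  gentle /\ forall M : qmod k V E, is_module M -> indecomposable M -> end_division M.

Definition torsion_class (T : qmod k V E -> Prop) : Prop :=
  [/\ forall M, T M -> is_module M,
      forall M N (f : 'M[k]_(qdim M, qdim N)),
        is_module M -> is_module N -> T M -> is_hom f -> row_full f -> T N
    & forall X Y Z (f : 'M[k]_(qdim X, qdim Y)) (g : 'M[k]_(qdim Y, qdim Z)),
        is_module X -> is_module Y -> is_module Z -> T X -> T Z ->
        is_hom f -> is_hom g -> row_free f -> row_full g ->
        (f == kermx g)%MS -> T Y].

Definition dsum (M N : qmod k V E) : qmod k V E :=
  {| qdim := (qdim M + qdim N)%N;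
     qidem := fun x => block_mx (qidem M x) 0 0 (qidem N x);
     qact := fun a => block_mx (qact M a) 0 0 (qact N a) |}.

Definition zero_mod : qmod k V E :=
  {| qdim := 0%N; qidem := fun _ => 0; qact := fun _ => 0 |}.

(* a letter (g, true) is the arrow g, (g, false) is its formal inverse g^-1 *)
Definition lsrc (l : E * bool) : V := if l.2 then src l.1 else tgt l.1.
Definition ltgt (l : E * bool) : V := if l.2 then tgt l.1 else src l.1.
Definition linv (l : E * bool) : E * bool := (l.1, ~~ l.2).

(* a word is (x, [:: l1; ...; ld]) standing for l_d ... l_1 starting at x
   (x matters only for d = 0, where it is the length-zero string e_x) *)
Fixpoint walk (x : V) (w : seq (E * bool)) : bool :=
  if w is l :: w' then (lsrc l == x) && walk (ltgt l) w' else true.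

Definition wend (x : V) (w : seq (E * bool)) : V := last x (map ltgt w).

Definition no_ideal_subword (w : seq (E * bool)) : Prop :=
  forall u, infix u w -> all (fun l => l.2) u -> ~ path_in_ideal (map fst u).

Definition is_string (xw : V * seq (E * bool)) : Prop :=
  [/\ walk xw.1 xw.2,
      sorted (fun l l' => l' != linv l) xw.2,
      no_ideal_subword xw.2
    & no_ideal_subword (rev (map linv xw.2))].

(* string module M(w): basis b_1..b_{d+1} (indices 0..d), b_j at x_j *)
Definition string_verts (x : V) (w : seq (E * bool)) : seq V := x :: map ltgt w.

Definition string_module (xw : V * seq (E * bool)) : qmod k V E :=
  {| qdim := (size xw.2).+1;
     qidem := fun y => \matrix_(p, q)
        ((p == q :> nat) && (nth None (map Some (string_verts xw.1 xw.2)) p == Some y))%:R;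
     qact := fun a => \matrix_(p, q)
        ((((q == p.+1 :> nat) && (nth None (map Some xw.2) p == Some (a, true)))
       || ((p == q.+1 :> nat) && (nth None (map Some xw.2) q == Some (a, false)))))%:R |}.

(* concatenation  v l u  of strings u and v via a letter l = g^{+-1} *)
Definition concat (u : V * seq (E * bool)) (l : E * bool) (v : V * seq (E * bool)) :=
  (u.1, u.2 ++ l :: v.2).

Definition closed_set (X : V * seq (E * bool) -> Prop) : Prop :=
  forall u v l, X u -> X v -> lsrc l = wend u.1 u.2 -> ltgt l = v.1 ->
    is_string (concat u l v) -> X (concat u l v).

Definition biclosed (X : V * seq (E * bool) -> Prop) : Prop :=
  closed_set X /\ closed_set (fun w => is_string w /\ ~ X w).

End BoundQuiver.

Section Preproj.
Variables (k : fieldType) (V E : finType) (src tgt : E -> V) (rel : E -> E -> bool).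

(* the quiver Qbar: inl g = g, inr g = g-star : tgt g -> src g *)
Definition pi_src (a : E + E) : V := match a with inl g => src g | inr g => tgt g end.
Definition pi_tgt (a : E + E) : V := match a with inl g => tgt g | inr g => src g end.
(* Ibar generated by  b a  and  a-star b-star  for  b a in I *)
Definition pi_rel (a b : E + E) : bool :=
  match a, b with
  | inl a, inl b => rel a b
  | inr b', inr a' => rel a' b'
  | _, _ => false
  end.

(* specialization: g-star |-> g^-1, (g-star)^-1 |-> g *)
Definition spec_letter (l : (E + E)%type * bool) : E * bool :=
  match l.1 with inl g => (g, l.2) | inr g => (g, ~~ l.2) end.
Definition specialize_word (xw : V * seq ((E + E)%type * bool)) : V * seq (E * bool) :=
  (xw.1, map spec_letter xw.2).

(* the class  M  (additive closure of the string modules M(w~) with w~ a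
   string of Pi(A) specializing to a string of A) *)
Definition shadow_class (N : qmod k V (E + E)%type) : Prop :=
  exists (ws : seq (V * seq ((E + E)%type * bool))) (N' : qmod k V (E + E)%type),
    [/\ forall w, w \in ws ->
          is_string pi_src pi_tgt pi_rel w /\ is_string src tgt rel (specialize_word w),
        is_module pi_src pi_tgt pi_rel N'
      & isomorphic (dsum N N') (foldr (@dsum k V (E + E)%type) (zero_mod k V (E + E)%type)
                                     (map (string_module k pi_src pi_tgt) ws))].

(* labels: D = [:: c_1; ...; c_d], c_i = true iff the split at the i-th
   break chosen in D is the right factor w' (w = u g_i^{+-1} w'),
   c_i = false iff it is the left factor (w = w' g_i^{+-1} u). *)
Definition str_letter (l : E * bool) (c : bool) : (E + E)%type * bool :=
  (if c == l.2 then @inl E E l.1 else @inr E E l.1, c).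
Definition str (xw : V * seq (E * bool)) (D : seq bool) : V * seq ((E + E)%type * bool) :=
  (xw.1, [seq str_letter lc.1 lc.2 | lc <- zip xw.2 D]).

Definition torshad_elt (Tt : qmod k V (E + E)%type -> Prop) : Prop :=
  exists T, torsion_class pi_src pi_tgt pi_rel T /\
    forall N, Tt N <-> T N /\ shadow_class N.

Definition Bset (Tt : qmod k V (E + E)%type -> Prop) (xw : V * seq (E * bool)) : Prop :=
  is_string src tgt rel xw /\
  exists D : seq bool, size D = size xw.2 /\
    Tt (string_module k pi_src pi_tgt (str xw D)).

End Preproj.

(* For a string w = u l v of A and a label D = D1 ++ c :: D2, the string str(w, D) of Pi(A)
   is str(u, D1) and str(v, D2) joined by a letter specializing to l, which is a direct arrow
   of Pi(A) when c is true and an inverse one when c is false.  Along a direct letter,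
   M(str(v, D2)) is a submodule of M(str(w, D)) with quotient M(str(u, D1)); along an inverse
   letter, M(str(v, D2)) is a quotient.  Since all these string modules lie in the shadow
   class, B is closed under concatenation because torsion classes are closed under
   extensions (choose c true), and its complement is closed because torsion classes are
   closed under quotients. *)

From mathcomp Require Import all_boot all_order all_algebra.
From mathcomp Require Import zify.
Set Implicit Arguments. Unset Strict Implicit. Unset Printing Implicit Defensive.
Import GRing.Theory.

Lemma map_infix (T T' : eqType) (f : T -> T') s1 s2 :
  infix s1 s2 -> infix (map f s1) (map f s2).
Proof.
case/infixP => [s [s' ->]]; apply/infixP; exists (map f s), (map f s').
by rewrite !map_cat.
Qed.

Section IdealFreeWords.
Variables (F : finType) (R : F -> F -> bool).

Definition no_ideal_pair (s : seq (F * bool)) : Prop :=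
  forall a b, infix [:: (a, true); (b, true)] s -> ~~ R a b.

Lemma no_ideal_subwordP s : no_ideal_subword R s <-> no_ideal_pair s.
Proof.
split=> [noI a b ab_s | noI u u_s /allP u_direct [a [b [ab_u Rab]]]].
  by apply/negP => Rab; apply: (noI _ ab_s) => //; exists a, b; rewrite infix_refl.
have ab_s : infix [:: (a, true); (b, true)] s.
  apply: infix_trans u_s; have -> : u = [seq (e, true) | e <- map fst u].
    by rewrite -map_comp map_id_in // => -[e c] /u_direct /= ->.
  exact: (map_infix (fun e => (e, true)) ab_u).
by move/negP: (noI a b ab_s).
Qed.

Lemma linvK : involutive (@linv F).
Proof. by case=> g b; rewrite /linv /= negbK. Qed.

End IdealFreeWords.

Section Specialization.
Variables (V E : finType) (src tgt : E -> V) (rel : E -> E -> bool).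

Notation psrc := (pi_src src tgt).
Notation ptgt := (pi_tgt src tgt).
Notation prel := (pi_rel rel).
Notation spec := (@spec_letter E).
Notation PL := ((E + E)%type * bool)%type.

Lemma spec_linv (l : PL) : spec (linv l) = linv (spec l).
Proof. by case: l => [[g|g] b]. Qed.

Lemma spec_lsrc (l : PL) : lsrc psrc ptgt l = lsrc src tgt (spec l).
Proof. by case: l => [[g|g] []]. Qed.

Lemma spec_ltgt (l : PL) : ltgt psrc ptgt l = ltgt src tgt (spec l).
Proof. by case: l => [[g|g] []]. Qed.

Lemma walk_specialize x (s : seq PL) :
  walk psrc ptgt x s = walk src tgt x (map spec s).
Proof. by elim: s x => //= l s IH x; rewrite spec_lsrc spec_ltgt IH. Qed.

Lemma map_spec_rev_linv (s : seq PL) :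
  map spec (rev (map (@linv _) s)) = rev (map (@linv _) (map spec s)).
Proof. by rewrite map_rev -!map_comp (eq_map spec_linv). Qed.

(* A relation of Ibar is either a relation of I or the reverse of one on starred arrows,
   so it is caught by the ideal condition on the specialized word or on its inverse. *)
Lemma no_ideal_pair_specialize (s : seq PL) :
  no_ideal_pair rel (map spec s) ->
  no_ideal_pair rel (rev (map (@linv _) (map spec s))) -> no_ideal_pair prel s.
Proof.
move=> noI noIinv [a|a] [b|b] ab_s //=.
  exact/noI/(map_infix spec ab_s).
apply: noIinv; rewrite -[X in infix X _]/(rev [:: (a, true); (b, true)]) infix_rev.
exact: map_infix (map_infix spec ab_s).
Qed.

Lemma is_string_specialize (w : V * seq PL) :
  is_string src tgt rel (specialize_word w) -> is_string psrc ptgt prel w.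
Proof.
case: w => x s [/= walk_s red_s /no_ideal_subwordP noI /no_ideal_subwordP noIinv].
split=> /=; first by rewrite walk_specialize.
- rewrite sorted_map in red_s; apply: sub_sorted red_s => l l' /=.
  by apply: contra => /eqP ->; rewrite spec_linv.
- exact/no_ideal_subwordP/no_ideal_pair_specialize.
apply/no_ideal_subwordP/no_ideal_pair_specialize; rewrite map_spec_rev_linv //.
by rewrite map_rev -map_comp revK (eq_map (linvK (F:=E))) map_id.
Qed.

Lemma spec_str_letter (l : E * bool) c : spec (str_letter l c) = l.
Proof. by case: l c => g [] []. Qed.

Lemma ltgt_str_letter (l : E * bool) c :
  ltgt psrc ptgt (str_letter l c) = ltgt src tgt l.
Proof. by rewrite spec_ltgt spec_str_letter. Qed.

Lemma specialize_str (w : V * seq (E * bool)) D :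
  size D = size w.2 -> specialize_word (str w D) = w.
Proof.
case: w => x s /= sizeD; rewrite /specialize_word /str /=; congr (_, _).
elim: s D sizeD => [|l s IH] [|c D] //= [sizeD].
by rewrite spec_str_letter IH.
Qed.

Lemma size_label_concat (u v : V * seq (E * bool)) l (D1 D2 : seq bool) c :
  size D1 = size u.2 -> size D2 = size v.2 ->
  size (D1 ++ c :: D2) = size (concat u l v).2.
Proof. by move=> sizeD1 sizeD2; rewrite /concat /= !size_cat /= sizeD1 sizeD2. Qed.

Lemma str_concat (u : V * seq (E * bool)) l v D1 c D2 :
  size D1 = size u.2 ->
  str (concat u l v) (D1 ++ c :: D2) =
  (u.1, (str u D1).2 ++ str_letter l c :: (str v D2).2).
Proof. by move=> sizeD1; rewrite /str /concat /= zip_cat // map_cat. Qed.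

End Specialization.

Section NatIndexedMatrices.
Variable k : fieldType.

Definition natmx {m n} (F : nat -> nat -> k) : 'M[k]_(m, n) := \matrix_(i, j) F i j.

Lemma eq_natmx m n (F G : nat -> nat -> k) :
  (forall i j, i < m -> j < n -> F i j = G i j) -> natmx F = natmx G :> 'M_(m, n).
Proof. by move=> eqFG; apply/matrixP => i j; rewrite !mxE eqFG. Qed.

Lemma mul_natmx m n p (F G : nat -> nat -> k) :
  ((natmx F : 'M_(m, n)) *m natmx G =
   natmx (fun i j => \sum_(q < n) F i q * G q j) :> 'M_(m, p))%R.
Proof. by apply/matrixP => i j; rewrite !mxE; apply: eq_bigr => q _; rewrite !mxE. Qed.

Lemma natmx0 m n : natmx (fun _ _ => 0%R) = 0%R :> 'M[k]_(m, n).
Proof. by apply/matrixP => i j; rewrite !mxE. Qed.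

Lemma natmx1 n : natmx (fun i j => (i == j)%:R%R) = 1%:M%R :> 'M[k]_n.
Proof. by apply/matrixP => i j; rewrite !mxE. Qed.

Lemma sum_mul_indicator n (F : nat -> k) b (t : nat) :
  (\sum_(q < n) F q * (b && (t == q :> nat))%:R = if b && (t < n)%N then F t else 0)%R.
Proof.
case: b => /=; last by rewrite big1 // => q _; rewrite mulr0.
case: ifP => tn.
  rewrite (bigD1 (Ordinal tn)) //= eqxx mulr1 big1 ?addr0 // => q /eqP qt.
  by case: eqP => [tq|]; rewrite ?mulr0 //; case: qt; apply: val_inj.
rewrite big1 // => q _; case: eqP => [tq|_]; last by rewrite mulr0.
by move: (ltn_ord q); rewrite -tq tn.
Qed.

Lemma sum_indicator_mul n (F : nat -> k) b (t : nat) :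
  (\sum_(q < n) (b && (t == q :> nat))%:R * F q = if b && (t < n)%N then F t else 0)%R.
Proof. by rewrite -sum_mul_indicator; apply: eq_bigr => q _; rewrite mulrC. Qed.

Lemma eqn_addr_sub j q o : (j == q + o) = (o <= j) && (j - o == q).
Proof.
case: (leqP o j) => oj /=; first by rewrite -{1}(subnK oj) eqn_add2r eq_sym.
by apply/negbTE/eqP; lia.
Qed.

(* Matrices act on row vectors from the right: [embmx o] sends the i-th basis vector to the
   (i + o)-th one, and [projmx o] is its transpose. *)
Definition embmx {m n} o : 'M[k]_(m, n) := natmx (fun i j => (j == i + o)%:R%R).
Definition projmx {m n} o : 'M[k]_(m, n) := natmx (fun i j => (i == j + o)%:R%R).

Lemma mul_natmx_embmx r m n o (F : nat -> nat -> k) :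
  (natmx F *m (embmx o : 'M_(m, n)) =
   natmx (fun i j => if ((o <= j) && (j - o < m))%N then F i (j - o)%N else 0)
    :> 'M_(r, n))%R.
Proof.
rewrite mul_natmx; apply: eq_natmx => i j _ _.
by under eq_bigr => q _ do rewrite eqn_addr_sub; rewrite sum_mul_indicator.
Qed.

Lemma mul_embmx_natmx m n p o (G : nat -> nat -> k) : o + m <= n ->
  ((embmx o : 'M_(m, n)) *m natmx G = natmx (fun i j => G (i + o)%N j) :> 'M_(m, p))%R.
Proof.
move=> omn; rewrite mul_natmx; apply: eq_natmx => i j im _.
transitivity (\sum_(q < n) (true && (i + o == q :> nat))%:R * G q j)%R.
  by apply: eq_bigr => q _; rewrite eq_sym.
by rewrite (sum_indicator_mul n (G^~ j)) ifT //; lia.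
Qed.

Lemma mul_natmx_projmx r m n o (F : nat -> nat -> k) : o + n <= m ->
  (natmx F *m (projmx o : 'M_(m, n)) = natmx (fun i j => F i (j + o)%N) :> 'M_(r, n))%R.
Proof.
move=> onm; rewrite mul_natmx; apply: eq_natmx => i j _ jn.
transitivity (\sum_(q < m) F i q * (true && (j + o == q :> nat))%:R)%R.
  by apply: eq_bigr => q _; rewrite eq_sym.
by rewrite (sum_mul_indicator m (F i)) ifT //; lia.
Qed.

Lemma mul_projmx_natmx m n p o (G : nat -> nat -> k) :
  ((projmx o : 'M_(m, n)) *m natmx G =
   natmx (fun i j => if ((o <= i) && (i - o < n))%N then G (i - o)%N j else 0)
    :> 'M_(m, p))%R.
Proof.
rewrite mul_natmx; apply: eq_natmx => i j _ _.
by under eq_bigr => q _ do rewrite eqn_addr_sub; rewrite (sum_indicator_mul n (G^~ j)).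
Qed.

Lemma mul_embmx_projmx m n o : o + m <= n -> ((embmx o : 'M_(m, n)) *m projmx o = 1%:M)%R.
Proof.
move=> omn; rewrite mul_embmx_natmx // -natmx1.
by apply: eq_natmx => i j _ _; rewrite eqn_add2r.
Qed.

Lemma row_free_embmx m n o : o + m <= n -> row_free (embmx o : 'M_(m, n)).
Proof. by move=> omn; apply/row_freeP; exists (projmx o); apply: mul_embmx_projmx. Qed.

Lemma row_full_projmx m n o : o + n <= m -> row_full (projmx o : 'M_(m, n)).
Proof. by move=> onm; apply/row_fullP; exists (embmx o); apply: mul_embmx_projmx. Qed.

Lemma mul_embmx_projmx0 m n p o : o + m <= n -> p <= o ->
  ((embmx o : 'M_(m, n)) *m (projmx 0 : 'M_(n, p)) = 0)%R.
Proof.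
move=> omn po; rewrite mul_embmx_natmx // -natmx0.
apply: eq_natmx => i j _ jp.
by have /negbTE -> : (i + o != j + 0) by apply/eqP; lia.
Qed.

Lemma mul_diag_natmx n m (b : nat -> bool) (G : nat -> nat -> k) :
  ((natmx (fun i j => ((i == j) && b i)%:R) : 'M_n) *m natmx G
   = natmx (fun i j => if b i then G i j else 0) :> 'M_(n, m))%R.
Proof.
rewrite mul_natmx; apply: eq_natmx => i j ni _.
under eq_bigr => q _ do rewrite andbC.
by rewrite (sum_indicator_mul n (G^~ j)) ni andbT.
Qed.

Lemma mul_natmx_diag n m (b : nat -> bool) (F : nat -> nat -> k) :
  ((natmx F : 'M_(m, n)) *m natmx (fun i j => ((i == j) && b i)%:R)
   = natmx (fun i j => if b j then F i j else 0) :> 'M_(m, n))%R.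
Proof.
rewrite mul_natmx; apply: eq_natmx => i j _ jn.
transitivity (\sum_(q < n) F i q * (b j && (j == q :> nat))%:R)%R.
  apply: eq_bigr => q _; congr (_ * _%:R)%R.
  by rewrite eq_sym andbC; case: (j =P q) => [<-|_]; rewrite ?andbF.
by rewrite (sum_mul_indicator n (F i)) jn andbT.
Qed.

End NatIndexedMatrices.
Arguments natmx {k m n} F.
Arguments embmx {k m n} o.
Arguments projmx {k m n} o.

Lemma eqmx_kermx (F : fieldType) m n p (f : 'M[F]_(m, n)) (g : 'M[F]_(n, p)) :
  row_free f -> row_full g -> (f *m g = 0)%R -> m + p = n -> (f == kermx g)%MS.
Proof.
move=> /eqP rank_f /eqP rank_g fg0 mpn.
have sub_fg : (f <= kermx g)%MS by rewrite sub_kermx fg0.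
rewrite -(mxrank_leqif_eq sub_fg).2 mxrank_ker rank_f rank_g.
by apply/eqP; lia.
Qed.

Section StringModules.
Variables (k : fieldType) (V F : finType) (s t : F -> V) (R : F -> F -> bool).

Notation SM := (string_module k s t).

Definition vertex_at x (w : seq (F * bool)) p := nth None (map Some (string_verts s t x w)) p.
Definition letter_at (w : seq (F * bool)) p := nth None (map Some w) p.

(* [arrow_at w a p q] holds when the arrow [a] sends the basis vector [b_p] of [M(w)] to [b_q]. *)
Definition arrow_at w a p q :=
  ((q == p.+1) && (letter_at w p == Some (a, true))) ||
  ((p == q.+1) && (letter_at w q == Some (a, false))).

Lemma string_idemE x w y :
  qidem (SM (x, w)) y = natmx (fun p q => ((p == q) && (vertex_at x w p == Some y))%:R%R).
Proof. by []. Qed.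

Lemma string_actE x w a : qact (SM (x, w)) a = natmx (fun p q => (arrow_at w a p q)%:R%R).
Proof. by []. Qed.

Lemma vertex_at_letter x w p l : walk s t x w -> letter_at w p = Some l ->
  vertex_at x w p = Some (lsrc s t l) /\ vertex_at x w p.+1 = Some (ltgt s t l).
Proof.
elim: w x p => [|l0 w IH] x [|p] //=; first by move=> /andP[/eqP <- _] [<-].
by move=> /andP[_ walk_w]; apply: IH.
Qed.

Lemma vertex_at_some x w p : p <= size w -> exists y, vertex_at x w p = Some y.
Proof.
by move=> pw; exists (nth x (string_verts s t x w) p); rewrite /vertex_at (nth_map x) //= size_map.
Qed.

Lemma letter_at_infix w p l1 l2 : letter_at w p = Some l1 -> letter_at w p.+1 = Some l2 ->
  infix [:: l1; l2] w.
Proof.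
elim: w p => [|l w IH] [|p] //=.
  by move=> [<-]; case: w {IH} => //= l' w [<-]; apply: (prefix_infix [:: l; l']).
by move=> wp1 wp2; apply: (infix_catl [:: l]); apply: IH wp1 wp2.
Qed.

(* Two consecutive arrow actions on a string module go through two adjacent letters,
   forming a length-two subword of [w] or of its inverse. *)
Lemma arrow_at_rel w a b p q r :
  no_ideal_pair R w -> no_ideal_pair R (rev (map (@linv _) w)) ->
  R a b -> arrow_at w a p q -> arrow_at w b q r -> False.
Proof.
move=> noI noIinv Rab.
case/orP => /andP[/eqP e1 /eqP h1]; case/orP => /andP[/eqP e2 /eqP h2].
- by subst q r; move: (noI _ _ (letter_at_infix h1 h2)); rewrite Rab.
- by subst q; case: e2 => er; subst r; rewrite h1 in h2.
- by subst p r; rewrite h1 in h2.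
subst p q; have := noIinv a b.
rewrite -[X in infix X _]/(rev [:: (b, true); (a, true)]) infix_rev Rab.
by move/(_ (map_infix (@linv _) (letter_at_infix h2 h1))).
Qed.

Lemma sum_string_idem x w : (\sum_(y : V) qidem (SM (x, w)) y = 1%:M)%R.
Proof.
apply/matrixP => p q; rewrite summxE mxE.
under eq_bigr => y _ do rewrite string_idemE mxE.
have [<-|pq] := eqVneq p q; last by rewrite big1 // => y _; rewrite val_eqE (negbTE pq).
have [z pz] := @vertex_at_some x w p (ltn_ord p).
rewrite !eqxx pz (bigD1 z) //= eqxx big1 ?addr0 // => y yz.
by rewrite inj_eq; [rewrite eq_sym (negbTE yz) | move=> ? ? []].
Qed.

Lemma is_module_string_module x w : is_string s t R (x, w) -> is_module s t R (SM (x, w)).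
Proof.
case=> /= walk_w _ /no_ideal_subwordP noI /no_ideal_subwordP noIinv; split.
- move=> y; rewrite string_idemE mul_diag_natmx.
  by apply: eq_natmx => p q _ _; case: (vertex_at x w p == Some y); rewrite ?andbF.
- move=> y z yz; rewrite !string_idemE mul_diag_natmx -natmx0.
  apply: eq_natmx => p q _ _; case: eqP => // ->.
  by rewrite inj_eq; [rewrite (negbTE yz) andbF | move=> ? ? []].
- exact: sum_string_idem.
- move=> a; rewrite string_actE !string_idemE mul_diag_natmx mul_natmx_diag.
  apply: eq_natmx => p q _ _; case apq: (arrow_at w a p q); last by do 2?case: ifP.
  suff [-> ->] : vertex_at x w p == Some (s a) /\ vertex_at x w q == Some (t a) by [].
  case/orP: apq => /andP[/eqP -> /eqP wp]; have [-> ->] := vertex_at_letter walk_w wp.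
    by rewrite !eqxx.
  by rewrite /= !eqxx.
- move=> a b Rab; rewrite !string_actE mul_natmx -natmx0; apply: eq_natmx => p r _ _.
  apply: big1 => q _; rewrite -natrM mulnb.
  by case: andP => [[apq bqr]|_] //; case: (arrow_at_rel noI noIinv Rab apq bqr).
Qed.

Lemma is_hom_embmx x1 w1 x2 w2 o : o + (size w1).+1 <= (size w2).+1 ->
  (forall i, i < (size w1).+1 -> vertex_at x2 w2 (i + o) = vertex_at x1 w1 i) ->
  (forall a i j, i < (size w1).+1 -> j < (size w2).+1 ->
     arrow_at w2 a (i + o) j = [&& o <= j, j - o < (size w1).+1 & arrow_at w1 a i (j - o)]) ->
  @is_hom k V F (SM (x1, w1)) (SM (x2, w2)) (embmx o).
Proof.
move=> fits vertexE arrowE; split.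
- move=> y; rewrite !string_idemE mul_natmx_embmx mul_embmx_natmx //.
  apply: eq_natmx => i j /= iw1 _.
  rewrite vertexE // [(i + o)%N == j]eq_sym eqn_addr_sub; case: (o <= j) => //=.
  case: (j - o =P i) iw1 => [<- ->|nji _]; first by rewrite eqxx.
  have /negbTE -> : i != j - o by apply/eqP => ij; apply: nji; rewrite ij.
  by case: ifP.
- move=> a; rewrite !string_actE mul_natmx_embmx mul_embmx_natmx //.
  by apply: eq_natmx => i j /= iw1 jw2; rewrite arrowE //; case: (o <= j); case: (j - o < _).
Qed.

Lemma is_hom_projmx x1 w1 x2 w2 o : o + (size w2).+1 <= (size w1).+1 ->
  (forall j, j < (size w2).+1 -> vertex_at x1 w1 (j + o) = vertex_at x2 w2 j) ->
  (forall a p j, p < (size w1).+1 -> j < (size w2).+1 ->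
     arrow_at w1 a p (j + o) = [&& o <= p, p - o < (size w2).+1 & arrow_at w2 a (p - o) j]) ->
  @is_hom k V F (SM (x1, w1)) (SM (x2, w2)) (projmx o).
Proof.
move=> fits vertexE arrowE; split.
- move=> y; rewrite !string_idemE mul_natmx_projmx // mul_projmx_natmx.
  apply: eq_natmx => p j /= _ jw2; rewrite eqn_addr_sub.
  case: (leqP o p) => //= /subnK <-; rewrite addnK.
  case: (p - o =P j) jw2 => [-> jw2|_ _]; last by case: ifP.
  by rewrite jw2 vertexE.
- move=> a; rewrite !string_actE mul_natmx_projmx // mul_projmx_natmx.
  by apply: eq_natmx => p j /= pw1 jw2; rewrite arrowE //; case: (o <= p); case: (p - o < _).
Qed.

End StringModules.

Section Concatenation.
Variables (k : fieldType) (V F : finType) (s t : F -> V) (R : F -> F -> bool).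
Variables (x : V) (U W : seq (F * bool)) (L : F * bool).

Notation SM := (string_module k s t).
Notation w := (U ++ L :: W).
Notation y := (ltgt s t L).

Lemma size_concat : size w = size U + (size W).+1.
Proof. by rewrite size_cat. Qed.

Lemma letter_at_catl p : p < size U -> letter_at w p = letter_at U p.
Proof. by move=> pU; rewrite /letter_at map_cat nth_cat size_map pU. Qed.

Lemma letter_at_cat_mid : letter_at w (size U) = Some L.
Proof. by rewrite /letter_at map_cat nth_cat size_map ltnn subnn. Qed.

Lemma letter_at_catr i : letter_at w (i + (size U).+1) = letter_at W i.
Proof.
rewrite /letter_at map_cat nth_cat size_map ifF; last by apply/negbTE; rewrite -leqNgt; lia.
by rewrite (_ : i + (size U).+1 - size U = i.+1) //; lia.
Qed.

Lemma vertex_at_catl p : p < (size U).+1 -> vertex_at s t x w p = vertex_at s t x U p.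
Proof.
move=> pU; rewrite /vertex_at /string_verts map_cat -cat_cons map_cat nth_cat.
by rewrite size_map /= size_map pU.
Qed.

Lemma vertex_at_catr i : vertex_at s t x w (i + (size U).+1) = vertex_at s t y W i.
Proof.
rewrite /vertex_at /string_verts map_cat -cat_cons map_cat nth_cat size_map /= size_map.
by rewrite ifF ?addnK //; apply/negbTE; rewrite -leqNgt; lia.
Qed.

Lemma is_hom_embmx_concat : L.2 ->
  @is_hom k V F (SM (y, W)) (SM (x, w)) (embmx (size U).+1).
Proof.
move=> L_direct; apply: is_hom_embmx => [|i _|a i j _]; rewrite ?size_concat.
- lia.
- exact: vertex_at_catr.
move=> jw; rewrite /arrow_at letter_at_catr.
case: (leqP (size U).+1 j) => Uj.
  have [j' ej] : exists j', j = j' + (size U).+1 by exists (j - (size U).+1); rewrite subnK.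
  subst j; have j'W : j' < (size W).+1 by lia.
  by rewrite addnK j'W /= letter_at_catr -!addSn !eqn_add2r.
apply/negbTE/negP; case/orP => /andP[/eqP ji]; first lia.
have -> : j = size U by lia.
by rewrite letter_at_cat_mid => /eqP[L_inv]; rewrite L_inv in L_direct.
Qed.

Lemma is_hom_projmx_concatl : L.2 ->
  @is_hom k V F (SM (x, w)) (SM (x, U)) (projmx 0).
Proof.
move=> L_direct; apply: is_hom_projmx => [|j jU|a p j _ jU]; rewrite ?size_concat ?addn0.
- lia.
- exact: vertex_at_catl.
rewrite /arrow_at subn0 /=.
case: (ltngtP p (size U)) => pU.
- rewrite (_ : p < (size U).+1) 1?letter_at_catl //=; last lia.
  by case: (p =P j.+1) => //= pj; rewrite letter_at_catl //; lia.
- rewrite (_ : p < (size U).+1 = false) /=; last lia.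
  apply/negP; case/orP => /andP[/eqP pj]; first lia.
  have -> : j = size U by lia.
  by rewrite letter_at_cat_mid => /eqP[L_inv]; rewrite L_inv in L_direct.
subst p; rewrite ltnSn /= (_ : j == (size U).+1 = false); last lia.
by case: (size U =P j.+1) => //= Uj; rewrite letter_at_catl //; lia.
Qed.

Lemma is_hom_projmx_concatr : ~~ L.2 ->
  @is_hom k V F (SM (x, w)) (SM (y, W)) (projmx (size U).+1).
Proof.
move=> L_inverse; apply: is_hom_projmx => [|j _|a p j pw _]; rewrite ?size_concat.
- lia.
- exact: vertex_at_catr.
rewrite size_concat in pw; rewrite /arrow_at letter_at_catr.
case: (leqP (size U).+1 p) => Up.
  have [p' ep] : exists p', p = p' + (size U).+1 by exists (p - (size U).+1); rewrite subnK.
  subst p; have p'W : p' < (size W).+1 by lia.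
  by rewrite addnK p'W /= letter_at_catr -!addSn !eqn_add2r.
apply/negbTE/negP; case/orP => /andP[/eqP pj]; last lia.
have -> : p = size U by lia.
by rewrite letter_at_cat_mid => /eqP[L_dir]; rewrite L_dir in L_inverse.
Qed.

Variable T : qmod k V F -> Prop.
Hypothesis torsion_T : torsion_class s t R T.

Lemma torsion_concat_ext : L.2 -> is_module s t R (SM (x, w)) ->
  T (SM (x, U)) -> T (SM (y, W)) -> T (SM (x, w)).
Proof.
move=> L_direct mod_w TU TW; case: torsion_T => modT _ extT.
have emb_free : row_free (embmx (size U).+1 : 'M[k]_((size W).+1, (size w).+1)).
  by apply: row_free_embmx; rewrite size_concat; lia.
have proj_full : row_full (projmx 0 : 'M[k]_((size w).+1, (size U).+1)).
  by apply: row_full_projmx; rewrite size_concat; lia.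
apply: (extT _ _ _ _ _ (modT _ TW) mod_w (modT _ TU) TW TU
          (is_hom_embmx_concat L_direct) (is_hom_projmx_concatl L_direct) emb_free proj_full).
apply: eqmx_kermx emb_free proj_full _ _.
- by apply: mul_embmx_projmx0; rewrite /= ?size_concat; lia.
- by rewrite /= size_concat; lia.
Qed.

Lemma torsion_concat_quotl : L.2 -> is_module s t R (SM (x, U)) ->
  T (SM (x, w)) -> T (SM (x, U)).
Proof.
move=> L_direct mod_U Tw; case: torsion_T => modT quotT _.
apply: quotT (modT _ Tw) mod_U Tw (is_hom_projmx_concatl L_direct) _.
by apply: row_full_projmx; rewrite /= size_concat; lia.
Qed.

Lemma torsion_concat_quotr : ~~ L.2 -> is_module s t R (SM (y, W)) ->
  T (SM (x, w)) -> T (SM (y, W)).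
Proof.
move=> L_inverse mod_W Tw; case: torsion_T => modT quotT _.
apply: quotT (modT _ Tw) mod_W Tw (is_hom_projmx_concatr L_inverse) _.
by apply: row_full_projmx; rewrite /= size_concat; lia.
Qed.

End Concatenation.

Lemma is_module_zero_mod (k : fieldType) (V F : finType) (s t : F -> V) (R : F -> F -> bool) :
  is_module s t R (zero_mod k V F).
Proof. by split=> * //=; apply/matrixP => -[]. Qed.

Lemma cat_cons_of_size (T : Type) (x0 : T) (s : seq T) m n : size s = m + n.+1 ->
  exists s1 c s2, [/\ s = s1 ++ c :: s2, size s1 = m & size s2 = n].
Proof.
move=> size_s; exists (take m s), (nth x0 s m), (drop m.+1 s).
have ms : m < size s by lia.
by rewrite -drop_nth // cat_take_drop size_takel ?size_drop 1?ltnW //; split=> //; lia.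
Qed.

Section Labels.
Variables (k : fieldType) (V E : finType) (src tgt : E -> V) (rel : E -> E -> bool).

Notation psrc := (pi_src src tgt).
Notation ptgt := (pi_tgt src tgt).
Notation prel := (pi_rel rel).
Notation string_A := (is_string src tgt rel).
Notation label_module w D := (string_module k psrc ptgt (str w D)).

Lemma is_module_label w D : string_A w -> size D = size w.2 ->
  is_module psrc ptgt prel (label_module w D).
Proof.
move=> w_str sizeD; apply: is_module_string_module.
by apply: is_string_specialize; rewrite specialize_str.
Qed.

Lemma shadow_class_label w D : string_A w -> size D = size w.2 ->
  shadow_class src tgt rel (label_module w D).
Proof.
move=> w_str sizeD; exists [:: str w D], (zero_mod k V (E + E)%type); split.
- move=> w'; rewrite mem_seq1 => /eqP ->; rewrite specialize_str //; split=> //.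
  by apply: is_string_specialize; rewrite specialize_str.
- exact: is_module_zero_mod.
exists 1%:M%R; split; last by rewrite row_full_unit unitmx1.
  by split=> ?; rewrite mul1mx mulmx1.
by rewrite row_free_unit unitmx1.
Qed.

Variables (Tt T : qmod k V (E + E)%type -> Prop).
Hypothesis TtE : forall N, Tt N <-> T N /\ shadow_class src tgt rel N.

Lemma BsetP w :
  Bset src tgt rel Tt w <-> string_A w /\ exists2 D, size D = size w.2 & T (label_module w D).
Proof.
split=> [[w_str [D [sizeD /TtE[TD _]]]] | [w_str [D sizeD TD]]]; split=> //; first by exists D.
by exists D; split=> //; apply/TtE; split=> //; apply: shadow_class_label.
Qed.

Hypothesis torsion_T : torsion_class psrc ptgt prel T.

Lemma torsion_label_concat u l v D1 D2 :
  string_A (concat u l v) -> ltgt src tgt l = v.1 ->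
  size D1 = size u.2 -> size D2 = size v.2 ->
  T (label_module u D1) -> T (label_module v D2) ->
  T (label_module (concat u l v) (D1 ++ true :: D2)).
Proof.
move=> w_str l_v sizeD1 sizeD2 Tu Tv.
have := is_module_label w_str (size_label_concat l true sizeD1 sizeD2).
rewrite str_concat // => mod_w; apply: (torsion_concat_ext torsion_T _ mod_w Tu) => //.
by rewrite ltgt_str_letter l_v.
Qed.

Lemma torsion_label_quotl u l v D1 D2 :
  string_A u -> size D1 = size u.2 ->
  T (label_module (concat u l v) (D1 ++ true :: D2)) -> T (label_module u D1).
Proof.
move=> u_str sizeD1; rewrite str_concat // => Tw.
exact: torsion_concat_quotl torsion_T _ (is_module_label u_str sizeD1) Tw.
Qed.

Lemma torsion_label_quotr u l v D1 D2 :
  string_A v -> ltgt src tgt l = v.1 -> size D1 = size u.2 -> size D2 = size v.2 ->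
  T (label_module (concat u l v) (D1 ++ false :: D2)) -> T (label_module v D2).
Proof.
move=> v_str l_v sizeD1 sizeD2; rewrite str_concat // => Tw.
have := torsion_concat_quotr torsion_T _ _ Tw; rewrite ltgt_str_letter l_v; apply=> //.
exact: is_module_label v_str sizeD2.
Qed.

End Labels.

Theorem lemma6p8 (k : fieldType) (V E : finType) (src tgt : E -> V)
  (rel : E -> E -> bool) :
  brick_gentle k src tgt rel ->
  forall Tt : qmod k V (E + E)%type -> Prop,
    torshad_elt src tgt rel Tt ->
    biclosed src tgt rel (Bset src tgt rel Tt).
Proof.
move=> _ Tt [T [torsion_T TtE]]; split.
- move=> u v l /(BsetP TtE)[u_str [D1 sizeD1 Tu]] /(BsetP TtE)[v_str [D2 sizeD2 Tv]] _ l_v w_str.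
  apply/(BsetP TtE); split=> //; exists (D1 ++ true :: D2).
    exact: size_label_concat.
  exact: (torsion_label_concat torsion_T w_str l_v sizeD1 sizeD2 Tu Tv).
move=> u v l [u_str uB] [v_str vB] _ l_v w_str; split=> // /(BsetP TtE)[_ [D sizeD TD]].
rewrite /concat /= size_cat /= in sizeD.
have [D1 [c [D2 [eD sizeD1 sizeD2]]]] := cat_cons_of_size false sizeD.
subst D; case: c {sizeD} TD => TD; [apply: uB | apply: vB]; apply/(BsetP TtE); split=> //.
- by exists D1 => //; exact: (torsion_label_quotl torsion_T u_str sizeD1 TD).
- by exists D2 => //; exact: (torsion_label_quotr torsion_T v_str l_v sizeD1 sizeD2 TD).
Qed.
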